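(* Let $\eta\in\mathbb{R}$ and let $U=\mathrm{diag}(1,e^{i\frac{2\pi}{3}\eta})$ be a qubit $Z$-phase gate. Let $\alpha,\beta\in\mathbb{R}$ satisfy $2\alpha-\beta=3k$ for some $k\in\mathbb{Z}$ and $\alpha+\beta=\eta$. Consider the two-qutrit diagonal unitary $W$ which, when the first (control) qutrit is in $\ket{0}$, $\ket{1}$, $\ket{2}$, applies respectively $Z(0,0)$, $Z(2\alpha-\beta,\alpha+\beta)$, $Z(\alpha+\beta,2\beta-\alpha)$ to the second (target) qutrit. Then $W$ emulates the $\ket{2}$-controlled $U$ gate: for every $c\in\{0,1,2\}$ and $t\in\{0,1\}$, $W\ket{c,t}=\ket{c,t}$ if $c\in\{0,1\}$ and $W\ket{2,t}=\ket{2}\otimes U\ket{t}$ (identifying qubit basis states with qutrit basis states of the same label).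
   Context: A qutrit is $\mathbb{C}^3$ with basis $\ket{0},\ket{1},\ket{2}$; $\omega=e^{2\pi i/3}$; for $a,b\in\mathbb{R}$, $Z(a,b)=\mathrm{diag}(1,\omega^a,\omega^b)$. In the paper $W$ is the two-qutrit circuit built from CX gates and $Z(\alpha,\beta)$-type phase gates (a controlled-phase construction from phase gadgets), whose action is as described. *)

From Stdlib Require Import Reals ZArith Arith.
From Coquelicot Require Import Coquelicot.
Open Scope R_scope.

Definition cexpi (theta : R) : C := (cos theta, sin theta).

Definition omega_pow (a : R) : C := cexpi (2 * PI * a / 3).

(* Vectors / matrices indexed by nat; only indices < 3 (qutrit) or < 2 (qubit) matter. *)
Definition qvec := nat -> C.
Definition qmat := nat -> nat -> C.
Definition vec2 := nat -> nat -> C.          (* two-qutrit state |i,j> components *)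

Definition basis (k : nat) : qvec := fun i => if Nat.eqb i k then RtoC 1 else RtoC 0.
Definition ket2 (c t : nat) : vec2 :=
  fun i j => if andb (Nat.eqb i c) (Nat.eqb j t) then RtoC 1 else RtoC 0.
Definition tensor (u v : qvec) : vec2 := fun i j => Cmult (u i) (v j).

Definition Zgate (a b : R) : qmat := fun i j =>
  if Nat.eqb i j then
    match i with 0 => RtoC 1 | 1 => omega_pow a | 2 => omega_pow b | _ => RtoC 0 end
  else RtoC 0.

Definition Ugate (eta : R) : qmat := fun i j =>
  if Nat.eqb i j then
    match i with 0 => RtoC 1 | 1 => cexpi (2 * PI * eta / 3) | _ => RtoC 0 end
  else RtoC 0.

(* Apply a qubit operator to a qubit vector (indices 0,1); the result is
   identified with a qutrit vector with zero |2> component. *)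
Definition apply_qubit (M : qmat) (v : qvec) : qvec := fun i =>
  if Nat.ltb i 2 then Cplus (Cmult (M i 0%nat) (v 0%nat)) (Cmult (M i 1%nat) (v 1%nat))
  else RtoC 0.

(* Two-qutrit operators: matrix entries <i,j| O |k,l> *)
Definition op2 := nat -> nat -> nat -> nat -> C.
Definition apply2 (O : op2) (psi : vec2) : vec2 := fun i j =>
  sum_n (fun k => sum_n (fun l => Cmult (O i j k l) (psi k l)) 2) 2.

Definition ctrl_op (G : nat -> qmat) : op2 := fun i j k l =>
  if Nat.eqb i k then G i j l else RtoC 0.

Definition W (alpha beta : R) : op2 := ctrl_op (fun c =>
  match c with
  | 0 => Zgate 0 0
  | 1 => Zgate (2 * alpha - beta) (alpha + beta)
  | _ => Zgate (alpha + beta) (2 * beta - alpha)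
  end).

(** W is controlled-diagonal, so it maps each basis state |c,t> to a multiple of
    itself, the phase being the diagonal entry of the target gate for control c.
    The hypothesis 2α - β ∈ 3ℤ makes ω^(2α-β) = 1, so the phases for controls 0 and 1
    are all 1, while for control 2 the phases 1 and ω^(α+β) = e^(2πiη/3) are exactly
    those of U. *)

From Stdlib Require Import Reals ZArith Arith Lia FunctionalExtensionality.
From Coquelicot Require Import Coquelicot.
Open Scope R_scope.

Definition diagonal (M : qmat) : Prop := forall i j, i <> j -> M i j = 0.

Definition scale2 (z : C) (psi : vec2) : vec2 := fun i j => Cmult z (psi i j).

Lemma scale2_1 (psi : vec2) : scale2 1 psi = psi.
Proof.
  apply functional_extensionality; intro i.
  apply functional_extensionality; intro j.
  unfold scale2; ring.
Qed.

Lemma sum_n_2 (f : nat -> C) : sum_n f 2 = Cplus (Cplus (f 0%nat) (f 1%nat)) (f 2%nat).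
Proof. rewrite !sum_Sn, sum_O. reflexivity. Qed.

Lemma apply2_ctrl_op_ket2 (G : nat -> qmat) (c t : nat) :
  (c < 3)%nat -> (t < 3)%nat ->
  apply2 (ctrl_op G) (ket2 c t) = fun i j => if Nat.eqb i c then G c j t else 0.
Proof.
  intros Hc Ht.
  apply functional_extensionality; intro i.
  apply functional_extensionality; intro j.
  unfold apply2, ctrl_op, ket2; rewrite !sum_n_2.
  destruct c as [|[|[|c]]]; try lia; destruct t as [|[|[|t]]]; try lia;
    destruct i as [|[|[|i]]]; simpl; ring.
Qed.

Lemma apply2_ctrl_op_diagonal_ket2 (G : nat -> qmat) (c t : nat) :
  (forall c, diagonal (G c)) -> (c < 3)%nat -> (t < 3)%nat ->
  apply2 (ctrl_op G) (ket2 c t) = scale2 (G c t t) (ket2 c t).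
Proof.
  intros Gdiag Hc Ht.
  rewrite apply2_ctrl_op_ket2 by assumption.
  apply functional_extensionality; intro i.
  apply functional_extensionality; intro j.
  unfold scale2, ket2.
  destruct (Nat.eqb_spec i c), (Nat.eqb_spec j t); subst; simpl;
    rewrite ?Gdiag by assumption; ring.
Qed.

Lemma Zgate_diagonal (a b : R) : diagonal (Zgate a b).
Proof. intros i j Hij; unfold Zgate; apply Nat.eqb_neq in Hij; now rewrite Hij. Qed.

Lemma Ugate_diagonal (eta : R) : diagonal (Ugate eta).
Proof. intros i j Hij; unfold Ugate; apply Nat.eqb_neq in Hij; now rewrite Hij. Qed.

Lemma W_ket2 (alpha beta : R) (c t : nat) :
  (c < 3)%nat -> (t < 3)%nat ->
  apply2 (W alpha beta) (ket2 c t) = scale2 (W alpha beta c t c t) (ket2 c t).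
Proof.
  intros Hc Ht; unfold W.
  rewrite apply2_ctrl_op_diagonal_ket2 by (try intros [|[|c']]; auto using Zgate_diagonal).
  unfold ctrl_op; now rewrite Nat.eqb_refl.
Qed.

Lemma apply_qubit_diagonal_basis (M : qmat) (t : nat) :
  diagonal M -> (t < 2)%nat ->
  apply_qubit M (basis t) = fun j => Cmult (M t t) (basis t j).
Proof.
  intros Mdiag Ht; apply functional_extensionality; intro j.
  unfold apply_qubit, basis.
  destruct t as [|[|t]]; try lia; destruct j as [|[|j]]; simpl;
    rewrite ?(Mdiag 0%nat 1%nat), ?(Mdiag 1%nat 0%nat) by lia; ring.
Qed.

Lemma tensor_basis_scale (z : C) (c t : nat) :
  tensor (basis c) (fun j => Cmult z (basis t j)) = scale2 z (ket2 c t).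
Proof.
  apply functional_extensionality; intro i.
  apply functional_extensionality; intro j.
  unfold tensor, scale2, ket2, basis.
  destruct (Nat.eqb i c), (Nat.eqb j t); simpl; ring.
Qed.

Lemma omega_pow_3Z (k : Z) : omega_pow (3 * IZR k) = 1.
Proof.
  unfold omega_pow, cexpi, RtoC.
  replace (2 * PI * (3 * IZR k) / 3) with (2 * (IZR k * PI)) by field.
  assert (Hsin : sin (IZR k * PI) = 0) by (apply sin_eq_0_1; now exists k).
  rewrite cos_2a_sin, sin_2a, Hsin. f_equal; ring.
Qed.

Lemma omega_pow_0 : omega_pow 0 = 1.
Proof. rewrite <- (omega_pow_3Z 0). f_equal. simpl. ring. Qed.

Theorem mainTheorem4 (eta alpha beta : R)
  (hk : exists k : Z, 2 * alpha - beta = 3 * IZR k)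
  (hsum : alpha + beta = eta) :
  (forall c t : nat, (c < 2)%nat -> (t < 2)%nat ->
     apply2 (W alpha beta) (ket2 c t) = ket2 c t) /\
  (forall t : nat, (t < 2)%nat ->
     apply2 (W alpha beta) (ket2 2 t) =
     tensor (basis 2) (apply_qubit (Ugate eta) (basis t))).
Proof.
  destruct hk as [k hk]; split.
  - intros c t Hc Ht.
    rewrite W_ket2 by lia.
    replace (W alpha beta c t c t) with (RtoC 1); [apply scale2_1|].
    destruct c as [|[|c]]; try lia; destruct t as [|[|t]]; try lia;
      unfold W, ctrl_op, Zgate; simpl; now rewrite ?hk, ?omega_pow_3Z, ?omega_pow_0.
  - intros t Ht.
    rewrite W_ket2, apply_qubit_diagonal_basis, tensor_basis_scale
      by auto using Ugate_diagonal with arith.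
    f_equal.
    destruct t as [|[|t]]; try lia; unfold W, ctrl_op, Zgate, Ugate, omega_pow; simpl;
      now rewrite ?hsum.
Qed.
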